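(* Let $N=(V,A)$ be a tree-based network and let $A'\subseteq A$. Then $A'$ is the set of arcs of a support tree for $N$ if and only if $A'$ is the union of the set of arboreal arcs of $N$ and (the arcs of $N$ corresponding to the edges of) a supporting set for $\mathcal{J}_N$.
   Context: A phylogenetic network on a nonempty finite set $X$ is a rooted acyclic digraph with no parallel arcs such that: the unique root has out-degree at least one; $X$ is exactly the set of vertices of out-degree zero (leaves), each of in-degree one; every other vertex either has in-degree one and out-degree at least two (a tree vertex) or in-degree at least two and out-degree one (a reticulation). If $|X|=1$, the network may also consist of the single vertex in $X$. An omnian is a non-leaf vertex all of whose children are reticulations. $N$ is tree-based if it has a spanning tree rooted at the root of $N$ all of whose leaves lie in $X$; a support tree for $N$ is such a spanning tree, i.e., a subgraph of $N$ with vertex set $V$ that is a directed tree rooted at the root of $N$ whose leaf set is exactly $X$ (equivalently, a subdivision of a phylogenetic $X$-tree embedded in $N$ using all vertices of $N$). Let $R_t$ be the set of reticulations of $N$ with no reticulation parent, and $Q_t$ the set of vertices of $N$ having a child in $R_t$. $\mathcal{J}_N$ is the bipartite graph with vertex bipartition $\{Q_t,R_t\}$ and an edge $\{q,r\}$ for each arc $(q,r)\in A$ with $q\in Q_t$, $r\in R_t$; each edge is identified with the corresponding arc of $N$. A supporting set for $\mathcal{J}_N$ is a set $E$ of edges of $\mathcal{J}_N$ such that each omnian in $Q_t$ is incident with at least one edge of $E$ and each vertex of $R_t$ is incident with exactly one edge of $E$. An arc $(u,v)$ of $N$ is arboreal if $u$ is a reticulation, or $v$ is a tree vertex or a leaf.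 *)

From mathcomp Require Import all_boot.
Set Implicit Arguments. Unset Strict Implicit. Unset Printing Implicit Defensive.

Section Net.
Variable V : finType.
Implicit Types (A T E : {set V * V}) (X : {set V}) (u v w : V).

Definition arel A : rel V := fun u v => (u, v) \in A.

Definition indeg A v : nat := #|[set u | (u, v) \in A]|.
Definition outdeg A v : nat := #|[set w | (v, w) \in A]|.

Definition acyclic A : Prop :=
  forall u v, (u, v) \in A -> ~~ connect (arel A) v u.

Definition is_tree_vertex A v : bool := (indeg A v == 1) && (2 <= outdeg A v).
Definition is_reticulation A v : bool := (2 <= indeg A v) && (outdeg A v == 1).

(* N = (V, A) is a phylogenetic network on X; V is the whole vertex type,
   arcs are a set of ordered pairs (so no parallel arcs). *)
Definition phylo_network A X : Prop :=
  X != set0 /\ acyclic A /\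
  (exists r, forall v, (indeg A v == 0) = (v == r)) /\
  ( (#|V| = 1 /\ A = set0 /\ X = setT) \/
    ( (forall v, (v \in X) = (outdeg A v == 0)) /\
      (forall v,
        [|| (indeg A v == 0) && (0 < outdeg A v),
            (v \in X) && (indeg A v == 1),
            is_tree_vertex A v
          | is_reticulation A v]) ) ).

Definition support_tree A X T : Prop :=
  T \subset A /\
  (forall v, indeg A v != 0 -> indeg T v = 1) /\
  (forall r v, indeg A r = 0 -> connect (arel T) r v) /\
  (forall v, (outdeg T v == 0) = (v \in X)).

Definition tree_based A X : Prop := exists T, support_tree A X T.

Definition omnian A X v : bool :=
  (v \notin X) && [forall w, ((v, w) \in A) ==> is_reticulation A w].

Definition Rt A : {set V} :=
  [set r | is_reticulation A r &&
           [forall u, ((u, r) \in A) ==> ~~ is_reticulation A u]].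
Definition Qt A : {set V} := [set q | [exists r in Rt A, (q, r) \in A]].

(* edges of J_N, identified with the corresponding arcs of N *)
Definition J_edges A : {set V * V} :=
  [set e in A | (e.1 \in Qt A) && (e.2 \in Rt A)].

Definition supporting_set A X E : Prop :=
  E \subset J_edges A /\
  (forall q, q \in Qt A -> omnian A X q -> exists r, (q, r) \in E) /\
  (forall r, r \in Rt A -> #|[set q | (q, r) \in E]| = 1).

Definition arboreal A X (e : V * V) : bool :=
  [|| is_reticulation A e.1, is_tree_vertex A e.2 | e.2 \in X].

Definition arboreal_arcs A X : {set V * V} := [set e in A | arboreal A X e].

End Net.

From mathcomp Require Import all_boot.
Set Implicit Arguments. Unset Strict Implicit. Unset Printing Implicit Defensive.

(* An arc (u, v) is arboreal exactly when u is a reticulation or v is not, and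
   every arboreal arc lies in every support tree: a reticulation has only one
   child, any other non-root vertex only one parent.  So a support tree is the
   set of arboreal arcs plus one arc into each reticulation v whose parents are
   all non-reticulations, i.e. v in R_t, the tail of that arc lying in Q_t.
   Conversely, such a choice gives every non-root vertex in-degree one: a
   reticulation outside R_t has a unique reticulation parent, since two of them
   would both be arboreal and hence both lie in some support tree.  Leaves come
   out right because a non-leaf keeps an arboreal out-arc unless it is an
   omnian; an omnian lies in Q_t (its child in a support tree is in R_t) and
   so keeps an arc of the supporting set.  Acyclicity then turns in-degree one
   into a spanning tree. *)

Section Arcs.
Variable V : finType.
Implicit Types (A B T : {set V * V}) (u v w q r : V).

Lemma indeg_neq0P A v : reflect (exists u, (u, v) \in A) (indeg A v != 0).
Proof.
by rewrite /indeg -lt0n card_gt0; apply: (iffP (set0Pn _)) => -[u uv];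
  exists u; rewrite inE in uv *.
Qed.

Lemma outdeg_neq0P A v : reflect (exists w, (v, w) \in A) (outdeg A v != 0).
Proof.
by rewrite /outdeg -lt0n card_gt0; apply: (iffP (set0Pn _)) => -[w vw];
  exists w; rewrite inE in vw *.
Qed.

Lemma indeg1_parent_uniq A u w v :
  indeg A v = 1 -> (u, v) \in A -> (w, v) \in A -> u = w.
Proof.
move/eqP/cards1P=> [x Ex] uv wv.
have /set1P-> : u \in [set x] by rewrite -Ex inE.
by have /set1P-> : w \in [set x] by rewrite -Ex inE.
Qed.

Lemma outdeg1_child_uniq A v u w :
  outdeg A v = 1 -> (v, u) \in A -> (v, w) \in A -> u = w.
Proof.
move/eqP/cards1P=> [x Ex] vu vw.
have /set1P-> : u \in [set x] by rewrite -Ex inE.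
by have /set1P-> : w \in [set x] by rewrite -Ex inE.
Qed.

Lemma eq_indeg A B v :
  (forall u, ((u, v) \in A) = ((u, v) \in B)) -> indeg A v = indeg B v.
Proof. by move=> eqAB; apply: eq_card => u; rewrite !inE eqAB. Qed.

Lemma indeg_eq1 A u v : (forall w, ((w, v) \in A) = (w == u)) -> indeg A v = 1.
Proof.
move=> parA; rewrite /indeg (_ : [set w | (w, v) \in A] = [set u]) ?cards1 //.
by apply/setP => w; rewrite !inE parA.
Qed.

Lemma subset_outdeg A B v : A \subset B -> outdeg A v <= outdeg B v.
Proof.
by move=> sAB; apply/subset_leq_card/subsetP => w; rewrite !inE => /(subsetP sAB).
Qed.

(* Walking backwards along T-arcs strictly shrinks the set of A-ancestors. *)
Lemma connect_from_source A T :
  acyclic A -> T \subset A -> (forall v, indeg A v != 0 -> indeg T v != 0) ->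
  forall v, exists2 r, indeg A r = 0 & connect (arel T) r v.
Proof.
move=> acA sTA parT v.
suff: forall n v, #|[set u | connect (arel A) u v]| < n ->
        exists2 r, indeg A r = 0 & connect (arel T) r v by apply; apply: ltnSn.
elim=> // n IH {}v ancv.
have [v_src | /parT/indeg_neq0P [u uvT]] := eqVneq (indeg A v) 0; first by exists v.
have uvA : arel A u v := subsetP sTA _ uvT.
have [|r r_src ru] := IH u; last by exists r; last exact: connect_trans ru (connect1 uvT).
rewrite ltnS in ancv; apply: leq_trans _ ancv; apply/proper_card/properP; split.
  by apply/subsetP => x; rewrite !inE => xu; apply: connect_trans xu (connect1 uvA).
by exists v; rewrite !inE ?connect0 ?(acA _ _ uvA).
Qed.

Lemma Rt_reticulation A r : r \in Rt A -> is_reticulation A r.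
Proof. by rewrite inE => /andP []. Qed.

Lemma Rt_parent_nonret A u r : r \in Rt A -> (u, r) \in A -> ~~ is_reticulation A u.
Proof. by rewrite inE => /andP [_ /forallP parR] /(implyP (parR u)). Qed.

Lemma Rt_intro A r :
  is_reticulation A r -> (forall u, (u, r) \in A -> ~~ is_reticulation A u) -> r \in Rt A.
Proof. by move=> retr parR; rewrite inE retr; apply/forallP => u; apply/implyP/parR. Qed.

Lemma notin_Rt A v : is_reticulation A v -> v \notin Rt A ->
  exists2 w, (w, v) \in A & is_reticulation A w.
Proof.
move=> retv; rewrite inE retv => /forallPn [w].
by rewrite negb_imply negbK => /andP [wv retw]; exists w.
Qed.

Lemma Qt_intro A q r : r \in Rt A -> (q, r) \in A -> q \in Qt A.
Proof. by move=> rR qr; rewrite inE; apply/existsP; exists r; rewrite rR. Qed.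

Lemma Qt_nonret A q : q \in Qt A -> ~~ is_reticulation A q.
Proof. by rewrite inE => /existsP [r /andP [rR qr]]; apply: Rt_parent_nonret rR qr. Qed.

Lemma in_J_edges A u v :
  ((u, v) \in J_edges A) = [&& (u, v) \in A, u \in Qt A & v \in Rt A].
Proof. by rewrite inE. Qed.

Lemma tree_vertex_nonret A v : is_tree_vertex A v -> ~~ is_reticulation A v.
Proof. by case/andP => /eqP indeg1 _; rewrite /is_reticulation indeg1. Qed.

End Arcs.

Section Network.
Variables (V : finType) (A : {set V * V}) (X : {set V}).
Hypothesis netN : phylo_network A X.
Implicit Types (T : {set V * V}) (u v w : V).

Lemma leafE v : (v \in X) = (outdeg A v == 0).
Proof.
have [_ [_ [_ [[_ [-> ->]] | [leafX _]]]]] := netN; last exact: leafX.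
rewrite in_setT; apply/esym; rewrite /outdeg cards_eq0.
by apply/eqP/setP => w; rewrite !inE.
Qed.

Lemma reticulation_notin_leaves v : is_reticulation A v -> v \notin X.
Proof. by case/andP => _ /eqP outdeg1; rewrite leafE outdeg1. Qed.

Lemma child_kind u v : (u, v) \in A ->
  [|| (v \in X) && (indeg A v == 1), is_tree_vertex A v | is_reticulation A v].
Proof.
have [_ [_ [_ [[_ [-> _]] | [_ kind]]]]] := netN; first by rewrite inE.
move=> uv; have := kind v.
by have /indeg_neq0P/negbTE-> : exists u, (u, v) \in A by exists u.
Qed.

Lemma nonret_childE u v : (u, v) \in A ->
  ~~ is_reticulation A v = is_tree_vertex A v || (v \in X).
Proof.
move=> uv; case/or3P: (child_kind uv) => [/andP [vX /eqP indeg1] | treev | retv].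
- by rewrite /is_reticulation indeg1 vX orbT.
- by rewrite treev tree_vertex_nonret.
- by rewrite retv (negbTE (reticulation_notin_leaves retv)) orbF;
    apply/esym/negP => /tree_vertex_nonret; rewrite retv.
Qed.

Lemma indeg_nonret_child u v : (u, v) \in A -> ~~ is_reticulation A v -> indeg A v = 1.
Proof.
by move=> uv; case/or3P: (child_kind uv) => [/andP [_ /eqP ->] | /andP [/eqP ->] | ->].
Qed.

Lemma in_arboreal_arcs u v : ((u, v) \in arboreal_arcs A X) =
  ((u, v) \in A) && (is_reticulation A u || ~~ is_reticulation A v).
Proof.
rewrite inE; have [uv | //] := boolP ((u, v) \in A).
by rewrite /arboreal /= (nonret_childE uv).
Qed.

Lemma spanning_connect_root T : T \subset A ->
  (forall v, indeg A v != 0 -> indeg T v = 1) ->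
  forall r v, indeg A r = 0 -> connect (arel T) r v.
Proof.
move=> sTA parT r v /eqP r_src.
have [_ [acA [[r0 rootE] _]]] := netN.
have [|r' /eqP r'_src r'v] := connect_from_source acA sTA _ v.
  by move=> x /parT->.
by move: r_src r'_src; rewrite !rootE => /eqP-> /eqP <-.
Qed.

Section SupportTree.
Variable T : {set V * V}.
Hypothesis treeT : support_tree A X T.

Lemma support_tree_parent_uniq u w v : (u, v) \in T -> (w, v) \in T -> u = w.
Proof.
move=> uv wv; have [sTA [indegT _]] := treeT; apply: (indeg1_parent_uniq _ uv wv).
by apply: indegT; apply/indeg_neq0P; exists u; apply: (subsetP sTA).
Qed.

Lemma arboreal_arcs_sub_support_tree : arboreal_arcs A X \subset T.
Proof.
have [sTA [indegT [_ leafT]]] := treeT.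
apply/subsetP => -[u v]; rewrite in_arboreal_arcs => /andP [uv /orP [retu | nretv]].
  have /negbT/outdeg_neq0P [w uwT] : (outdeg T u == 0) = false.
    by rewrite leafT; apply/negbTE/reticulation_notin_leaves.
  case/andP: retu => _ /eqP outdeg1.
  by rewrite (outdeg1_child_uniq outdeg1 uv (subsetP sTA _ uwT)).
have indeg1 := indeg_nonret_child uv nretv.
have [w wvT] : exists w, (w, v) \in T by apply/indeg_neq0P; rewrite indegT ?indeg1.
by rewrite (indeg1_parent_uniq indeg1 uv (subsetP sTA _ wvT)).
Qed.

Lemma arboreal_in_support_tree u v :
  (u, v) \in A -> is_reticulation A u || ~~ is_reticulation A v -> (u, v) \in T.
Proof.
by move=> uv arb; apply: (subsetP arboreal_arcs_sub_support_tree); rewrite in_arboreal_arcs uv.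
Qed.

Lemma reticulation_parent_uniq x w v :
  (x, v) \in A -> is_reticulation A x -> (w, v) \in A -> is_reticulation A w -> x = w.
Proof.
move=> xv retx wv retw; apply: (support_tree_parent_uniq (v := v)).
  by apply: arboreal_in_support_tree; rewrite ?retx.
by apply: arboreal_in_support_tree; rewrite ?retw.
Qed.

Lemma support_tree_Rt u v :
  (u, v) \in T -> ~~ is_reticulation A u -> is_reticulation A v -> v \in Rt A.
Proof.
move=> uvT nretu retv; apply: Rt_intro => // w wv; apply: contraNN nretu => retw.
suff <- : w = u by [].
by apply: support_tree_parent_uniq uvT; apply: arboreal_in_support_tree; rewrite ?retw.
Qed.

Lemma support_tree_supporting_set : supporting_set A X (T :&: J_edges A).
Proof.
have [sTA [indegT [_ leafT]]] := treeT.
split; first exact: subsetIr.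
split=> [q qQ /andP [qX /forallP omq] | r rR].
  have /negbT/outdeg_neq0P [w qwT] : (outdeg T q == 0) = false by rewrite leafT (negbTE qX).
  have qw := subsetP sTA _ qwT.
  have wR := support_tree_Rt qwT (Qt_nonret qQ) (implyP (omq w) qw).
  by exists w; rewrite in_setI qwT in_J_edges qw qQ wR.
have r_par : indeg A r != 0.
  by case/andP: (Rt_reticulation rR) => indeg2 _; rewrite -lt0n (leq_trans _ indeg2).
rewrite -(indegT r r_par); apply: eq_indeg => q; rewrite in_setI in_J_edges rR andbT.
apply/andP/idP => [[] // | qrT]; have qr := subsetP sTA _ qrT.
by rewrite qrT qr (Qt_intro rR qr).
Qed.

Lemma support_tree_arcsE : T = arboreal_arcs A X :|: (T :&: J_edges A).
Proof.
have [sTA _] := treeT.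
apply/setP => -[u v]; rewrite in_setU in_setI in_J_edges in_arboreal_arcs.
apply/idP/idP => [uvT | /orP [/andP [uv arb] | /andP [] //]]; last first.
  exact: arboreal_in_support_tree.
have uv := subsetP sTA _ uvT; rewrite uvT uv /=.
have [// | /norP [nretu /negPn retv]] := boolP (is_reticulation A u || ~~ is_reticulation A v).
have vR := support_tree_Rt uvT nretu retv.
by rewrite vR (Qt_intro vR uv).
Qed.

End SupportTree.

Section SupportingSet.
Hypothesis basedN : tree_based A X.
Variable E : {set V * V}.
Hypothesis suppE : supporting_set A X E.

Let T := arboreal_arcs A X :|: E.

Lemma supporting_set_arc u v : (u, v) \in E -> [&& (u, v) \in A, u \in Qt A & v \in Rt A].
Proof. by have [sEJ _] := suppE => /(subsetP sEJ); rewrite in_J_edges. Qed.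

Lemma in_supported_tree u v : ((u, v) \in T) =
  ((u, v) \in A) && (is_reticulation A u || ~~ is_reticulation A v) || ((u, v) \in E).
Proof. by rewrite in_setU in_arboreal_arcs. Qed.

Lemma supported_tree_sub : T \subset A.
Proof.
apply/subsetP => -[u v]; rewrite in_supported_tree.
by case/orP => [/andP [] // | /supporting_set_arc /andP []].
Qed.

Lemma supported_tree_indeg v : indeg A v != 0 -> indeg T v = 1.
Proof.
have [_ [_ E_indeg]] := suppE.
case/indeg_neq0P => u uv; have [retv | nretv] := boolP (is_reticulation A v); last first.
  rewrite -(indeg_nonret_child uv nretv); apply: eq_indeg => w.
  rewrite in_supported_tree nretv orbT andbT.
  by apply/idP/idP => [/orP [// | /supporting_set_arc /andP []] | ->].
have [vR | vNR] := boolP (v \in Rt A).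
  rewrite -(E_indeg v vR); apply: eq_indeg => w; rewrite in_supported_tree retv /= orbF.
  by have [wv | //] := boolP ((w, v) \in A); rewrite (negbTE (Rt_parent_nonret vR wv)).
have [w wv retw] := notin_Rt retv vNR; have [T0 treeT0] := basedN.
apply: (indeg_eq1 (u := w)) => x; rewrite in_supported_tree retv /= orbF.
apply/idP/eqP => [/orP [/andP [xv retx] | /supporting_set_arc /and3P [_ _ vR]] | ->].
- exact: (reticulation_parent_uniq treeT0 xv retx wv retw).
- by rewrite vR in vNR.
- by rewrite wv retw.
Qed.

Lemma supported_tree_leaves v : (outdeg T v == 0) = (v \in X).
Proof.
have [_ [omE _]] := suppE.
have [vX | vNX] := boolP (v \in X).
  by rewrite -leqn0 (leq_trans (subset_outdeg v supported_tree_sub)) // leqn0 -leafE.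
apply/negbTE/outdeg_neq0P; have [retv | nretv] := boolP (is_reticulation A v).
  have /outdeg_neq0P [w vw] : outdeg A v != 0 by rewrite -leafE.
  by exists w; rewrite in_supported_tree vw retv.
have [omv | nomv] := boolP (omnian A X v).
  have [T0 treeT0] := basedN; have [sT0A [_ [_ leafT0]]] := treeT0.
  have /negbT/outdeg_neq0P [w vwT0] : (outdeg T0 v == 0) = false.
    by rewrite leafT0 (negbTE vNX).
  have vw := subsetP sT0A _ vwT0.
  have vQ : v \in Qt A.
    apply: (Qt_intro _ vw); case/andP: (omv) => _ /forallP allret.
    exact: (support_tree_Rt treeT0 vwT0 nretv (implyP (allret w) vw)).
  have [r vrE] := omE v vQ omv.
  by exists r; rewrite in_supported_tree vrE orbT.
move: nomv; rewrite /omnian vNX => /forallPn [w]; rewrite negb_imply => /andP [vw nretw].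
by exists w; rewrite in_supported_tree vw nretw orbT.
Qed.

Lemma supported_tree_support_tree : support_tree A X T.
Proof.
split; first exact: supported_tree_sub.
split; first exact: supported_tree_indeg.
split; first exact: spanning_connect_root supported_tree_sub supported_tree_indeg.
exact: supported_tree_leaves.
Qed.

End SupportingSet.
End Network.

Theorem theorem7 (V : finType) (A : {set V * V}) (X : {set V}) :
  phylo_network A X -> tree_based A X ->
  forall A' : {set V * V}, A' \subset A ->
    (support_tree A X A' <->
     exists E : {set V * V}, supporting_set A X E /\ A' = arboreal_arcs A X :|: E).
Proof.
move=> netN basedN A' _; split=> [treeA' | [E [suppE ->]]].
  exists (A' :&: J_edges A).
  split; [exact: support_tree_supporting_set | exact: support_tree_arcsE].
exact: supported_tree_support_tree.
Qed.
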